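(* The standard parabolic faces of $\mathbf P$ are in bijection with the connected subdiagrams of the extended Dynkin diagram that contain $\{-\lambda\}$, via $F_I\mapsto$ the connected component containing $\{-\lambda\}$ of the induced subdiagram on $\{\alpha_j\mid j\notin I\}\cup\{-\lambda\}$ (whose set of simple-root vertices is indexed by $\overline I^0$). This bijection is an isomorphism of posets, where faces and subdiagrams are both ordered by inclusion.
   Context: Let $\mathfrak g$ be a finite-dimensional complex simple Lie algebra with root system $\Phi$, base $\Pi=\{\alpha_1,\dots,\alpha_n\}$, Weyl group $W$; $E$ is the real span of $\Pi$ with $W$-invariant inner product $(\cdot,\cdot)$. Fix a dominant integral weight $\lambda=\sum_i m_i\alpha_i$; for $x\in E$, $c_i(x)$ is the coefficient of $\alpha_i$ in $x$. Weight polytope $\mathbf P=\mathrm{conv}(W\lambda)$. For $I\subseteq\{1,\dots,n\}$, $F_I=\{x\in\mathbf P\mid c_i(x)=m_i\ \forall i\in I\}$ ($F_\emptyset=\mathbf P$); a face of $\mathbf P$ is standard parabolic if it equals $F_I$ for some $I$ (i.e. it is an intersection of the coordinate faces $F_{\{i\}}$). The extended Dynkin diagram is the Dynkin diagram of $\Pi$ with an additional node $\{-\lambda\}$ joined by a single edge to $\alpha_i$ iff $(\lambda,\alpha_i)>0$; subdiagrams are induced subdiagrams on vertex subsets. $\overline I^0$ denotes the set of indices $j$ with $\alpha_j$ in the connected component containing $\{-\lambda\}$ of the induced subdiagram on $\{\alpha_j\mid j\notin I\}\cup\{-\lambda\}$. *)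

(* Encoding of the root-system data of a finite-dimensional
   complex simple Lie algebra via the Gram matrix of its simple roots. *)
From HB Require Import structures.
From mathcomp Require Import all_boot all_order all_algebra.
From mathcomp Require Import reals.
Set Implicit Arguments.
Unset Strict Implicit.
Unset Printing Implicit Defensive.
Import Order.TTheory GRing.Theory Num.Theory.
Local Open Scope ring_scope.

Section Defs.
Variables (R : realType) (n : nat).

(* E = R^n, coordinates w.r.t. the base Pi = {alpha_1..alpha_n};
   c_i(x) = x 0 i.  alpha i is the i-th simple root. *)
Definition alpha (i : 'I_n) : 'rV[R]_n := delta_mx 0 i.

(* W-invariant inner product, given by the Gram matrix B i j = (alpha_i, alpha_j). *)
Definition ip (B : 'M[R]_n) (x y : 'rV[R]_n) : R := (x *m B *m y^T) 0 0.

Definition connected_in (T : finType) (e : rel T) (S : {set T}) : Prop :=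
  forall A : {set T}, A \subset S -> A != set0 -> A != S ->
    exists x y, [/\ x \in A, y \in S :\: A & e x y].

Definition dynkin_edge (B : 'M[R]_n) : rel 'I_n :=
  fun i j => (i != j) && (B i j != 0).

(* B is the Gram matrix of the base of the root system of a finite-dimensional
   complex simple Lie algebra: symmetric, positive definite, Cartan integers
   2(a_i,a_j)/(a_j,a_j) nonpositive integers off the diagonal, and connected
   Dynkin diagram (n >= 1).  *)
Definition simple_gram (B : 'M[R]_n) : Prop :=
  [/\ (0 < n)%N, B^T = B,
      (forall x : 'rV[R]_n, x != 0 -> 0 < ip B x x),
      (forall i j : 'I_n, i != j -> exists k : nat, 2 * B i j / B j j = - k%:R)
    & connected_in (dynkin_edge B) [set: 'I_n]].

Definition dominant_integral (B : 'M[R]_n) (lam : 'rV[R]_n) : Prop :=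
  forall i : 'I_n, exists k : nat,
    2 * ip B lam (alpha i) / ip B (alpha i) (alpha i) = k%:R.

Definition sref (B : 'M[R]_n) (i : 'I_n) (x : 'rV[R]_n) : 'rV[R]_n :=
  x - (2 * ip B x (alpha i) / ip B (alpha i) (alpha i)) *: alpha i.

(* The Weyl orbit W lam (W is generated by the simple reflections). *)
Inductive weyl_orbit (B : 'M[R]_n) (lam : 'rV[R]_n) : 'rV[R]_n -> Prop :=
  | wo_base : weyl_orbit B lam lam
  | wo_step : forall i x, weyl_orbit B lam x -> weyl_orbit B lam (sref B i x).

Definition conv (S : 'rV[R]_n -> Prop) (x : 'rV[R]_n) : Prop :=
  exists (m : nat) (p : 'I_m -> 'rV[R]_n) (t : 'I_m -> R),
    [/\ forall k, S (p k), forall k, 0 <= t k, \sum_(k < m) t k = 1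
      & x = \sum_(k < m) t k *: p k].

Definition wpoly (B : 'M[R]_n) (lam : 'rV[R]_n) : 'rV[R]_n -> Prop :=
  conv (weyl_orbit B lam).

(* F_I = {x in P | c_i(x) = m_i for all i in I}, where lam = sum m_i alpha_i *)
Definition face (B : 'M[R]_n) (lam : 'rV[R]_n) (I : {set 'I_n}) (x : 'rV[R]_n)
  : Prop := wpoly B lam x /\ forall i, i \in I -> x 0 i = lam 0 i.

(* Extended Dynkin diagram: vertices option 'I_n, None = {-lam};
   None -- alpha_i iff (lam, alpha_i) > 0. *)
Definition ext_edge (B : 'M[R]_n) (lam : 'rV[R]_n) : rel (option 'I_n) :=
  fun u v => match u, v with
  | Some i, Some j => dynkin_edge B i j
  | Some i, None | None, Some i => 0 < ip B lam (alpha i)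
  | None, None => false
  end.

Definition compl_vertices (I : {set 'I_n}) : {set option 'I_n} :=
  [set v | if v is Some j then j \notin I else true].

(* vertex set of the connected component containing {-lam} of that subdiagram
   (its simple-root vertices are indexed by \overline I^0) *)
Definition diag_comp (B : 'M[R]_n) (lam : 'rV[R]_n) (I : {set 'I_n})
  : {set option 'I_n} :=
  let V := compl_vertices I in
  [set v | connect [rel x y | [&& x \in V, y \in V & ext_edge B lam x y]] None v].

End Defs.

(* Let D be the set of simple roots in the component of -lam for I. First, every root w(alpha_j) is
   positive or negative: its coordinates and those of its coroot are integral,
   so each nonzero piece of it has norm at least its own, and it cannot split
   into two nonzero pieces with nonnegative inner product. The usual deletion
   argument on words then gives w lam <= lam coordinatewise. Second, outside
   D and I the simple roots are orthogonal to D and to lam, and an induction on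
   words shows that an orbit point agreeing with lam on I agrees with lam off D;
   hence so does every point of F_I. Conversely, walking along the component
   from -lam and reflecting at each new vertex yields an orbit point of F_I that
   lowers that coordinate. So F_I lies in F_J exactly when the component for I
   lies in the one for J, and a connected subdiagram through -lam is the
   component for the complement of its simple roots. *)

From HB Require Import structures.
From mathcomp Require Import all_boot all_order all_algebra.
From mathcomp Require Import reals ring lra.
Import Order.TTheory GRing.Theory Num.Theory.
Local Open Scope ring_scope.
Set Implicit Arguments.
Unset Strict Implicit.
Unset Printing Implicit Defensive.

Section ConnectInd.
Variables (T : finType) (e : rel T).
Implicit Types (x y u v : T).

Lemma connect_ind (P : T -> Prop) x :
  P x -> (forall u v, connect e x u -> e u v -> P u -> P v) ->
  forall y, connect e x y -> P y.
Proof.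
move=> Px step y /connectP [p]; elim/last_ind: p y => [|p z IH] y /=.
  by move=> _ ->.
rewrite rcons_path last_rcons => /andP [ep exz] ->.
by apply: step (IH _ ep erefl) => //; apply/connectP; exists p.
Qed.

Lemma connect_exit (A : {pred T}) x y : connect e x y -> x \in A -> y \notin A ->
  exists u v, [/\ u \in A, v \notin A, e u v & connect e x v].
Proof.
move=> cxy xA yA.
have : y \in A \/ exists u v, [/\ u \in A, v \notin A, e u v & connect e x v].
  move: y cxy {yA}; apply: connect_ind => [|u v cxu euv]; first by left.
  case=> [uA|]; last by right.
  have [vA|vA] := boolP (v \in A); first by left.
  by right; exists u, v; split => //; apply: connect_trans cxu (connect1 euv).
by case=> //; rewrite (negPf yA).
Qed.

End ConnectInd.

Section Components.
Variables (T : finType) (e : rel T).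
Implicit Types (V W S : {set T}) (x y u v : T).

Definition induced (V : {set T}) : rel T := [rel x y | [&& x \in V, y \in V & e x y]].

Definition component (V : {set T}) (x : T) : {set T} := [set y | connect (induced V) x y].

Lemma mem_component V x : x \in component V x.
Proof. by rewrite inE. Qed.

Lemma component_sub V x : x \in V -> component V x \subset V.
Proof.
move=> xV; apply/subsetP => y; rewrite inE; move: y.
by apply: (connect_ind (P := fun y => y \in V)) => // u v _ /and3P [].
Qed.

Lemma component_edge V x u v : x \in V ->
  u \in component V x -> v \in V -> e u v -> v \in component V x.
Proof.
move=> xV uC vV euv; have uV := subsetP (component_sub xV) u uC.
by move: uC; rewrite !inE => /connect_trans; apply; apply: connect1; apply/and3P.
Qed.

Lemma component_subset V W x : x \in W ->
  component V x \subset W -> component V x \subset component W x.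
Proof.
move=> xW sub; apply/subsetP => y; rewrite [y \in component V x]inE; move: y.
apply: (connect_ind (P := fun y => y \in component W x)) => [|u v cu uv uC];
  first exact: mem_component.
have vC : v \in component V x by rewrite inE (connect_trans cu (connect1 uv)).
by case/and3P: uv => _ _ euv; apply: component_edge euv => //; apply: (subsetP sub).
Qed.

Hypothesis e_sym : symmetric e.

Lemma connected_component V x : connected_in e (component V x).
Proof.
move=> A sA /set0Pn [a aA] AC.
have [b /setDP [bC bA]] : exists b, b \in component V x :\: A.
  by apply/set0Pn; rewrite setD_eq0; apply: contra AC => sCA; rewrite eqEsubset sA.
have symV : connect_sym (induced V).
  by apply: sym_connect_sym => u v; rewrite /induced /= e_sym andbCA.
have cab : connect (induced V) a b.
  move: (subsetP sA a aA) bC; rewrite !inE symV; exact: connect_trans.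
have [u [v [uA vA /and3P [_ _ euv] cav]]] := connect_exit cab aA bA.
exists u, v; split => //; rewrite inE vA inE.
by move: (subsetP sA a aA); rewrite inE => /connect_trans; apply.
Qed.

Lemma connected_componentE S x : x \in S -> connected_in e S -> component S x = S.
Proof.
move=> xS connS; apply/eqP/negPn/negP => CS.
have C0 : component S x != set0 by apply/set0Pn; exists x; apply: mem_component.
have [u [v [uC /setDP [vS vC] euv]]] := connS _ (component_sub xS) C0 CS.
by rewrite (component_edge xS uC vS euv) in vC.
Qed.

End Components.

Lemma sumr_sym_pairs (V : nmodType) m (f : 'I_m -> 'I_m -> V) :
  (forall i j, f i j = f j i) ->
  \sum_i \sum_j f i j =
    \sum_i f i i + \sum_(i : 'I_m) \sum_(j : 'I_m | (j < i)%N) f i j *+ 2.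
Proof.
move=> fC.
have split_row (i : 'I_m) : \sum_j f i j =
    f i i + \sum_(j : 'I_m | (i < j)%N) f i j + \sum_(j : 'I_m | (j < i)%N) f i j.
  rewrite (bigD1 i) //= -addrA (bigID (fun j : 'I_m => (i < j)%N)) /=.
  congr (_ + (_ + _)); apply: eq_bigl => j.
  - by rewrite -val_eqE /= andb_idl // => /gtn_eqF ->.
  - by rewrite -val_eqE /= -leqNgt ltn_neqAle andbC eq_sym.
rewrite (eq_bigr _ (fun i _ => split_row i)) !big_split /= -addrA; congr (_ + _).
rewrite (exchange_big_dep xpredT) //= -big_split /=; apply: eq_bigr => i _.
by rewrite -big_split; apply: eq_bigr => j _; rewrite fC mulr2n.
Qed.

Lemma convex_comb_eq_ub (F : numDomainType) m (t p : 'I_m -> F) c :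
  (forall k, 0 <= t k) -> \sum_k t k = 1 -> (forall k, p k <= c) ->
  \sum_k t k * p k = c -> forall k, t k != 0 -> p k = c.
Proof.
move=> t_ge0 t_sum p_le comb k tk0.
have gap0 : \sum_k t k * (c - p k) = 0.
  under eq_bigr => k' _ do rewrite mulrBr.
  by rewrite sumrB -mulr_suml t_sum mul1r comb subrr.
have gap_ge0 k' : true -> 0 <= t k' * (c - p k') by rewrite mulr_ge0 ?subr_ge0.
move/eqP: (psumr_eq0P gap_ge0 gap0 (i := k) isT).
by rewrite mulf_eq0 (negPf tk0) subr_eq0 => /eqP.
Qed.

Lemma conv_mem (R : realType) n (S : 'rV[R]_n -> Prop) x : S x -> conv S x.
Proof.
move=> Sx; exists 1%N, (fun _ => x), (fun _ => 1).
by split; rewrite // big_ord1 // scale1r.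
Qed.

Section RootData.
Variables (R : realType) (n : nat) (B : 'M[R]_n).
Local Notation alpha := (@alpha R n).
Local Notation "<< x , y >>" := (ip B x y).
Implicit Types (x y v : 'rV[R]_n) (i j k l p q : 'I_n).

Hypothesis gram_sym : B^T = B.
Hypothesis gram_posdef : forall x, x != 0 -> 0 < <<x, x>>.
Hypothesis gram_cartan : forall i j, i != j -> exists k : nat, 2 * B i j / B j j = - k%:R.

Lemma ipE x y : <<x, y>> = \sum_i \sum_j x 0 i * B i j * y 0 j.
Proof.
rewrite /ip mxE.
under eq_bigr => j _ do rewrite mxE big_distrl.
rewrite exchange_big /=; apply: eq_bigr => i _; apply: eq_bigr => j _.
by rewrite !mxE.
Qed.

Lemma ipC x y : <<x, y>> = <<y, x>>.
Proof.
have trE (M : 'M[R]_1) : M 0 0 = M^T 0 0 by rewrite mxE.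
by rewrite /ip trE !trmx_mul trmxK gram_sym mulmxA.
Qed.

Lemma ipDl x y v : <<x + y, v>> = <<x, v>> + <<y, v>>.
Proof. by rewrite /ip !mulmxDl mxE. Qed.

Lemma ipZl c x v : <<c *: x, v>> = c * <<x, v>>.
Proof. by rewrite /ip -!scalemxAl mxE. Qed.

Lemma ipBl x y v : <<x - y, v>> = <<x, v>> - <<y, v>>.
Proof. by rewrite /ip !mulmxBl !mxE. Qed.

Lemma ipDr x y v : <<v, x + y>> = <<v, x>> + <<v, y>>.
Proof. by rewrite ipC ipDl !(ipC _ v). Qed.

Lemma ipZr c x v : <<v, c *: x>> = c * <<v, x>>.
Proof. by rewrite ipC ipZl ipC. Qed.

Lemma ipBr x y v : <<v, x - y>> = <<v, x>> - <<v, y>>.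
Proof. by rewrite ipC ipBl !(ipC _ v). Qed.

Lemma alphaE i j : alpha i 0 j = (j == i)%:R.
Proof. by rewrite mxE eqxx. Qed.

Lemma ip_alphar x i : <<x, alpha i>> = \sum_k x 0 k * B k i.
Proof.
rewrite ipE; apply: eq_bigr => k _.
rewrite (bigD1 i) //= alphaE eqxx mulr1 big1 ?addr0 // => j /negPf ji.
by rewrite alphaE ji mulr0.
Qed.

Lemma ip_alpha i j : <<alpha i, alpha j>> = B i j.
Proof.
rewrite ip_alphar (bigD1 i) //= alphaE eqxx mul1r big1 ?addr0 // => k /negPf ki.
by rewrite alphaE ki mul0r.
Qed.

Lemma ip_sum_alphar x y : <<x, y>> = \sum_k y 0 k * <<x, alpha k>>.
Proof.
rewrite ipE exchange_big /=; apply: eq_bigr => k _.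
by rewrite ip_alphar mulr_sumr; apply: eq_bigr => l _; ring.
Qed.

Lemma gramC i j : B i j = B j i.
Proof. by rewrite -!ip_alpha ipC. Qed.

Lemma gram_diag_gt0 i : 0 < B i i.
Proof.
rewrite -ip_alpha; apply: gram_posdef; apply/eqP => /matrixP /(_ 0 i).
by rewrite alphaE eqxx mxE; apply/eqP; rewrite oner_eq0.
Qed.

Lemma gram_diag_neq0 i : B i i != 0.
Proof. by rewrite gt_eqF ?gram_diag_gt0. Qed.

Lemma gram_offdiag_le0 i j : i != j -> B i j <= 0.
Proof.
move=> /gram_cartan [k cartan_ij].
have -> : B i j = (2 * B i j / B j j) * B j j / 2 by field; rewrite gram_diag_neq0.
by rewrite cartan_ij !mulNr oppr_le0 divr_ge0 // mulr_ge0 // ltW ?gram_diag_gt0.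
Qed.

Lemma cartan_int i j : 2 * B i j / B j j \is a Num.int.
Proof.
have [->|ij] := eqVneq i j; first by rewrite mulfK ?gram_diag_neq0.
by have [k ->] := gram_cartan ij; rewrite rpredN rpred_nat.
Qed.

Definition reflection v x := x - (2 * <<x, v>> / <<v, v>>) *: v.

Lemma reflectionD v x y : reflection v (x + y) = reflection v x + reflection v y.
Proof. by rewrite /reflection ipDl mulrDr mulrDl scalerDl addrACA opprD. Qed.

Lemma reflectionZ v c x : reflection v (c *: x) = c *: reflection v x.
Proof. by rewrite /reflection ipZl scalerBr scalerA; congr (_ - _ *: _); ring. Qed.

Lemma ip_reflection v x y :
  <<v, v>> != 0 -> <<reflection v x, reflection v y>> = <<x, y>>.
Proof. by move=> v0; rewrite /reflection ipBl !ipBr !ipZl !ipZr (ipC v y); field. Qed.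

Lemma reflectionK v : <<v, v>> != 0 -> involutive (reflection v).
Proof.
move=> v0 x; have reflection_self : reflection v v = - v.
  by rewrite /reflection mulfK // (_ : 2 = 1 + 1) // scalerDl scale1r opprD addrA subrr add0r.
rewrite [reflection v x]/reflection -scaleNr reflectionD reflectionZ reflection_self.
by rewrite scalerN scaleNr opprK subrK.
Qed.

Lemma reflection_scale v c :
  <<v, v>> != 0 -> c != 0 -> reflection (c *: v) =1 reflection v.
Proof.
move=> v0 c0 x; rewrite /reflection !ipZr !ipZl scalerA; congr (_ - _ *: _).
by field; rewrite c0 v0.
Qed.

Definition coroot_pairing x i := 2 * <<x, alpha i>> / <<alpha i, alpha i>>.

Lemma srefE i x : sref B i x = x - coroot_pairing x i *: alpha i.
Proof. by []. Qed.

Lemma sref_coord i x l : sref B i x 0 l = x 0 l - coroot_pairing x i * (l == i)%:R.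
Proof. by rewrite srefE !mxE eqxx. Qed.

Lemma sref_coord_neq i x l : l != i -> sref B i x 0 l = x 0 l.
Proof. by move=> /negPf li; rewrite sref_coord li mulr0 subr0. Qed.

Lemma coroot_pairing_int x i :
  (forall j, x 0 j \is a Num.int) -> coroot_pairing x i \is a Num.int.
Proof.
move=> x_int; rewrite /coroot_pairing ip_alpha ip_alphar mulr_sumr mulr_suml.
apply: rpred_sum => k _.
have -> : 2 * (x 0 k * B k i) / B i i = x 0 k * (2 * B k i / B i i).
  by field; apply: gram_diag_neq0.
by rewrite rpredM ?cartan_int.
Qed.

Fixpoint weyl_act (w : seq 'I_n) x :=
  if w is i :: w' then sref B i (weyl_act w' x) else x.

Lemma weyl_act_rcons w j x : weyl_act (rcons w j) x = weyl_act w (sref B j x).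
Proof. by elim: w => //= i w ->. Qed.

Lemma weyl_actD w x y : weyl_act w (x + y) = weyl_act w x + weyl_act w y.
Proof. by elim: w => //= i w ->; apply: reflectionD. Qed.

Lemma weyl_actZ w c x : weyl_act w (c *: x) = c *: weyl_act w x.
Proof. by elim: w => //= i w ->; apply: reflectionZ. Qed.

Lemma ip_weyl_act w x y : <<weyl_act w x, weyl_act w y>> = <<x, y>>.
Proof. by elim: w => //= i w <-; apply: ip_reflection; rewrite ip_alpha gram_diag_neq0. Qed.

Lemma weyl_act_sref w j x :
  weyl_act w (sref B j x) = reflection (weyl_act w (alpha j)) (weyl_act w x).
Proof.
by rewrite srefE -scaleNr weyl_actD weyl_actZ /reflection !ip_weyl_act scaleNr.
Qed.

Lemma weyl_orbitP lam x : weyl_orbit B lam x <-> exists w, x = weyl_act w lam.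
Proof.
split; first by elim=> [|i y _ [w ->]]; [exists [::] | exists (i :: w)].
by case=> w ->; elim: w => [|i w IH] /=; constructor.
Qed.

(* [x 0 j * B j j / <<x, x>>] are the coordinates of the coroot of [x] on the
   simple coroots. *)
Definition rootlike x := [/\ forall j, x 0 j \is a Num.int,
  forall j, x 0 j * B j j / <<x, x>> \is a Num.int & 0 < <<x, x>>].

Lemma rootlike_sref i x : rootlike x -> rootlike (sref B i x).
Proof.
case=> x_int cx_int x_gt0; have xx0 : <<x, x>> != 0 by rewrite gt_eqF.
have ip_sref : <<sref B i x, sref B i x>> = <<x, x>>.
  by apply: ip_reflection; rewrite ip_alpha gram_diag_neq0.
split; rewrite ?ip_sref // => l; rewrite sref_coord.
  by rewrite rpredB ?x_int // rpredM ?rpred_nat ?coroot_pairing_int.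
have [->|li] := eqVneq l i; last by rewrite mulr0 subr0.
have -> : (x 0 i - coroot_pairing x i * 1) * B i i / <<x, x>> =
    x 0 i * B i i / <<x, x>> - 2 * <<x, alpha i>> / <<x, x>>.
  by rewrite /coroot_pairing ip_alpha; field; rewrite xx0 gram_diag_neq0.
rewrite rpredB // ip_alphar mulr_sumr mulr_suml rpred_sum // => k _.
have -> : 2 * (x 0 k * B k i) / <<x, x>> = x 0 k * B k k / <<x, x>> * (2 * B i k / B k k).
  by rewrite (gramC k); field; rewrite xx0 gram_diag_neq0.
by rewrite rpredM ?cartan_int.
Qed.

Lemma rootlike_alpha j : rootlike (alpha j).
Proof.
split; rewrite ?ip_alpha ?gram_diag_gt0 // => l; rewrite alphaE ?rpred_nat //.
by have [->|_] := eqVneq l j; rewrite ?mul1r ?divff ?gram_diag_neq0 // !mul0r.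
Qed.

Lemma rootlike_weyl_act w j : rootlike (weyl_act w (alpha j)).
Proof. by elim: w => [|i w IH] /=; [exact: rootlike_alpha | exact: rootlike_sref]. Qed.

Lemma ip_self_div_int y (N : R) : N != 0 ->
  (forall j, y 0 j \is a Num.int) -> (forall j, y 0 j * B j j / N \is a Num.int) ->
  <<y, y>> / N \is a Num.int.
Proof.
move=> N0 y_int cy_int; rewrite ipE mulr_suml.
under eq_bigr => i _ do rewrite mulr_suml.
rewrite (sumr_sym_pairs (f := fun i j => y 0 i * B i j * y 0 j / N)); last first.
  by move=> i j; rewrite gramC; ring.
rewrite rpredD ?rpred_sum // => i _.
  have -> : y 0 i * B i i * y 0 i / N = y 0 i * (y 0 i * B i i / N) by ring.
  by rewrite rpredM.
rewrite rpred_sum // => j _.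
have -> : y 0 i * B i j * y 0 j / N *+ 2 =
    y 0 i * (y 0 j * B j j / N) * (2 * B i j / B j j).
  by rewrite -mulr_natl; field; rewrite N0 gram_diag_neq0.
by apply: rpredM; [apply: rpredM | apply: cartan_int].
Qed.

Definition restr (S : {set 'I_n}) x : 'rV[R]_n := \row_j (if j \in S then x 0 j else 0).

Lemma restr_setC S x : restr S x + restr (~: S) x = x.
Proof. by apply/rowP => j; rewrite !mxE inE; case: (j \in S); rewrite ?addr0 ?add0r. Qed.

(* Integrality forces each nonzero piece to have norm at least [<<x, x>>]. *)
Lemma rootlike_split S x : rootlike x ->
  0 <= <<restr S x, restr (~: S) x>> -> restr S x = 0 \/ restr (~: S) x = 0.
Proof.
case=> x_int cx_int x_gt0 cross_ge0.
have normD : <<x, x>> = <<restr S x, restr S x>> + <<restr (~: S) x, restr (~: S) x>>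
    + 2 * <<restr S x, restr (~: S) x>>.
  by rewrite -{1 2}(restr_setC S x) ipDl !ipDr (ipC (restr (~: S) x)); ring.
have norm_ge (T : {set 'I_n}) : restr T x != 0 -> <<x, x>> <= <<restr T x, restr T x>>.
  move=> T0; rewrite -[leLHS]mul1r -ler_pdivlMr //.
  have ratio_gt0 : 0 < <<restr T x, restr T x>> / <<x, x>>.
    by rewrite divr_gt0 // gram_posdef.
  have ratio_int : <<restr T x, restr T x>> / <<x, x>> \is a Num.int.
    apply: ip_self_div_int; rewrite ?gt_eqF // => j; rewrite mxE;
      by case: ifP; rewrite ?mul0r ?rpred0 ?x_int ?cx_int.
  by rewrite -[leRHS]gtr0_norm // norm_intr_ge1 // gt_eqF.
have [->|S0] := eqVneq (restr S x) 0; first by left.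
have [->|SC0] := eqVneq (restr (~: S) x) 0; first by right.
by exfalso; move: (norm_ge S S0) (norm_ge (~: S) SC0); lra.
Qed.

Lemma rootlike_sign x : rootlike x -> (forall j, 0 <= x 0 j) \/ (forall j, x 0 j <= 0).
Proof.
move=> x_root; set S := [set j | 0 < x 0 j].
have : 0 <= <<restr S x, restr (~: S) x>>.
  rewrite ipE; apply: sumr_ge0 => i _; apply: sumr_ge0 => j _; rewrite !mxE !inE.
  case: (ltrP 0 (x 0 i)) => xi; case: (ltrP 0 (x 0 j)) => xj /=; rewrite ?mul0r ?mulr0 //.
  have ij : i != j by apply: contraTneq xi => ->; rewrite -leNgt.
  exact: mulr_le0 (mulr_ge0_le0 (ltW xi) (gram_offdiag_le0 ij)) xj.
case/(rootlike_split x_root) => /rowP restr0.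
- right=> j; have := restr0 j; rewrite !mxE !inE.
  by case: ltrP => // xj x0; rewrite x0 ltxx in xj.
- by left=> j; have := restr0 j; rewrite !mxE !inE; case: ltrP => [/ltW|_ /= ->].
Qed.

Lemma weyl_act_rcons_coord w j x l : weyl_act (rcons w j) x 0 l =
  weyl_act w x 0 l - coroot_pairing x j * weyl_act w (alpha j) 0 l.
Proof. by rewrite weyl_act_rcons srefE -scaleNr weyl_actD weyl_actZ !mxE mulNr. Qed.

Lemma weyl_act_delete w j : (forall l, weyl_act w (alpha j) 0 l <= 0) ->
  exists2 w', (size w' < size w)%N & weyl_act (rcons w j) =1 weyl_act w'.
Proof.
elim: w => [|i w IH] /= neg; first by have := neg j; rewrite alphaE eqxx ler10.
have [pos|neg'] := rootlike_sign (rootlike_weyl_act w j); last first.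
  by have [w' lt_w' eq_w'] := IH neg'; exists (i :: w') => // x /=; rewrite eq_w'.
set g := weyl_act w (alpha j) in pos neg *.
(* [g >= 0] while [s_i g <= 0], and [s_i] only moves the [i]-th coordinate. *)
have g_eq : g = g 0 i *: alpha i.
  apply/rowP => l; rewrite !mxE eqxx /=.
  have [->|li] := eqVneq l i; first by rewrite mulr1.
  by rewrite mulr0; apply/eqP; rewrite eq_le pos andbT -(sref_coord_neq _ li).
have gg0 : <<g, g>> != 0 by rewrite ip_weyl_act ip_alpha gram_diag_neq0.
have gi0 : g 0 i != 0.
  by apply: contra gg0 => /eqP gi0; rewrite g_eq gi0 scale0r -(scale0r 0) ipZl mul0r.
have ii0 : <<alpha i, alpha i>> != 0 by rewrite ip_alpha gram_diag_neq0.
(* [w s_j w^-1] is the reflection along [w alpha_j = g 0 i *: alpha i], i.e. [s_i]. *)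
exists w => // x; rewrite weyl_act_rcons weyl_act_sref -/g g_eq reflection_scale //.
exact: reflectionK.
Qed.

Lemma weyl_act_ind (P : 'rV[R]_n -> Prop) x :
  P x -> (forall w j, P (weyl_act w x) ->
    (forall l, 0 <= weyl_act w (alpha j) 0 l) -> P (weyl_act (rcons w j) x)) ->
  forall w, P (weyl_act w x).
Proof.
move=> Px step w; elim: {w}(size w) {-2}w (leqnn (size w)) => [|m IH] w.
  by rewrite leqn0 => /nilP ->.
case/lastP: w => [//|w j]; rewrite size_rcons ltnS => le_wm.
have [pos|neg] := rootlike_sign (rootlike_weyl_act w j); first by apply: step pos; apply: IH.
have [w' lt_w' eq_w'] := weyl_act_delete neg.
by rewrite eq_w'; apply: IH; rewrite (leq_trans _ le_wm) // ltnW.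
Qed.

Lemma dominant_ip_alpha_ge0 lam : dominant_integral B lam -> forall i, 0 <= <<lam, alpha i>>.
Proof.
move=> dom i; have [k pair_k] := dom i.
have : 0 <= coroot_pairing lam i by rewrite /coroot_pairing pair_k ler0n.
by rewrite /coroot_pairing ip_alpha pmulr_lge0 ?invr_gt0 ?gram_diag_gt0 // pmulr_rge0.
Qed.

Section DominantWeight.
Variable lam : 'rV[R]_n.
Hypothesis lam_dom : forall i, 0 <= <<lam, alpha i>>.

Lemma coroot_pairing_ge0 j : 0 <= coroot_pairing lam j.
Proof.
by rewrite /coroot_pairing ip_alpha divr_ge0 ?mulr_ge0 ?lam_dom ?ltW ?gram_diag_gt0.
Qed.

Lemma weyl_act_le w j : weyl_act w lam 0 j <= lam 0 j.
Proof.
move: j; apply: (weyl_act_ind (P := fun y => forall j, y 0 j <= lam 0 j)) => //.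
move=> {}w i le_lam pos j; rewrite weyl_act_rcons_coord.
by have := le_lam j; have := mulr_ge0 (coroot_pairing_ge0 i) (pos j); lra.
Qed.

Lemma weyl_orbit_le x j : weyl_orbit B lam x -> x 0 j <= lam 0 j.
Proof. by case/weyl_orbitP => w ->; apply: weyl_act_le. Qed.

Section Separation.
Variables I D : {set 'I_n}.
Hypothesis sep_gram : forall p q, p \in D -> q \notin D -> q \notin I -> B p q = 0.
Hypothesis sep_lam : forall q, q \notin D -> q \notin I -> <<lam, alpha q>> = 0.

Lemma ip_alpha_sep y q : (forall p, p \notin D -> y 0 p = lam 0 p) ->
  q \notin D -> q \notin I -> <<y, alpha q>> = 0.
Proof.
move=> y_lam qD qI; rewrite -(sep_lam qD qI) !ip_alphar; apply: eq_bigr => p _.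
by have [pD|pD] := boolP (p \in D); [rewrite !sep_gram ?mulr0 | rewrite y_lam].
Qed.

Lemma rootlike_supp_sep g y : rootlike g -> (forall i, i \in I -> g 0 i = 0) ->
  (forall p, p \notin D -> y 0 p = lam 0 p) -> 0 < <<y, g>> ->
  forall q, q \notin D -> g 0 q = 0.
Proof.
move=> g_root gI y_lam yg_gt0.
have cross_ge0 : 0 <= <<restr D g, restr (~: D) g>>.
  rewrite ipE; apply: sumr_ge0 => p _; apply: sumr_ge0 => q _; rewrite !mxE !inE.
  case: ifP => pD; rewrite ?mul0r //; case: ifP => qD; rewrite ?mulr0 //.
  have [qI|qI] := boolP (q \in I); first by rewrite (gI q) // mulr0.
  by rewrite sep_gram ?pD ?qD // mulr0 mul0r.
case: (rootlike_split g_root cross_ge0) => /rowP g0; last first.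
  by move=> q qD; have := g0 q; rewrite !mxE inE qD.
exfalso; move: yg_gt0; rewrite ip_sum_alphar big1 ?ltxx // => q _.
have [->|gq] := eqVneq (g 0 q) 0; first by rewrite mul0r.
have qD : q \notin D by apply: contra gq => qD; have := g0 q; rewrite !mxE qD => ->.
have qI : q \notin I by apply: contra gq => /gI ->.
by rewrite ip_alpha_sep // mulr0.
Qed.

Lemma weyl_act_fix_sep w : (forall i, i \in I -> weyl_act w lam 0 i = lam 0 i) ->
  forall j, j \notin D -> weyl_act w lam 0 j = lam 0 j.
Proof.
pose P y := (forall i, i \in I -> y 0 i = lam 0 i) -> forall j, j \notin D -> y 0 j = lam 0 j.
apply: (weyl_act_ind (P := P)) => // {}w k IH pos fixI j jD.
set c := coroot_pairing lam k; set g := weyl_act w (alpha k) in pos *.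
have coordE l : weyl_act (rcons w k) lam 0 l = weyl_act w lam 0 l - c * g 0 l.
  exact: weyl_act_rcons_coord.
have c_ge0 : 0 <= c := coroot_pairing_ge0 k.
have fixI' i : i \in I -> weyl_act w lam 0 i = lam 0 i /\ c * g 0 i = 0.
  move=> iI; have := fixI i iI; rewrite coordE.
  have := weyl_act_le w i; have := mulr_ge0 c_ge0 (pos i); split; lra.
have fixD := IH (fun i iI => (fixI' i iI).1).
rewrite coordE fixD //.
have [->|c0] := eqVneq c 0; first by rewrite mul0r subr0.
suff -> : g 0 j = 0 by rewrite mulr0 subr0.
apply: (rootlike_supp_sep (rootlike_weyl_act w k) _ fixD) => // [i iI|].
  by have /eqP := (fixI' i iI).2; rewrite mulf_eq0 (negPf c0) => /eqP.
rewrite /g ip_weyl_act lt_def lam_dom andbT; apply: contra c0 => /eqP ip0.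
by rewrite /c /coroot_pairing ip0 mulr0 mul0r.
Qed.

Lemma face_fix_sep x : face B lam I x -> forall j, j \notin D -> x 0 j = lam 0 j.
Proof.
move=> [[m [p [t [orbit_p t_ge0 t_sum ->]]]] fixI] j jD.
have coordE l : (\sum_k t k *: p k) 0 l = \sum_k t k * p k 0 l.
  by rewrite summxE; apply: eq_bigr => k _; rewrite mxE.
rewrite coordE -[lam 0 j]mul1r -t_sum mulr_suml; apply: eq_bigr => k _.
have [->|tk0] := eqVneq (t k) 0; first by rewrite !mul0r.
have fixIk i : i \in I -> p k 0 i = lam 0 i.
  move=> iI; apply: (convex_comb_eq_ub (p := fun k' : 'I_m => p k' 0 i) t_ge0 t_sum _ _ tk0).
    by move=> k'; apply: weyl_orbit_le.
  by rewrite -coordE fixI.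
have [w pk] := (weyl_orbitP lam (p k)).1 (orbit_p k).
by move: fixIk; rewrite pk => /weyl_act_fix_sep ->.
Qed.

End Separation.

Lemma diag_compE I :
  diag_comp B lam I = component (ext_edge B lam) (compl_vertices I) None.
Proof. by []. Qed.

Lemma ext_edge_sym : symmetric (ext_edge B lam).
Proof. by case=> [i|] [j|] //=; rewrite /dynkin_edge eq_sym gramC. Qed.

Lemma ip_alpha_orbit_ge x k p : weyl_orbit B lam x -> x 0 k = lam 0 k ->
  <<lam, alpha k>> + (x 0 p - lam 0 p) * B p k <= <<x, alpha k>>.
Proof.
move=> x_orb xk.
have term_ge0 q : 0 <= (x 0 q - lam 0 q) * B q k.
  have [->|qk] := eqVneq q k; first by rewrite xk subrr mul0r.
  by rewrite mulr_le0 ?subr_le0 ?weyl_orbit_le ?gram_offdiag_le0.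
have -> : <<x, alpha k>> = <<lam, alpha k>> + \sum_q (x 0 q - lam 0 q) * B q k.
  by rewrite !ip_alphar -big_split; apply: eq_bigr => q _ /=; rewrite -mulrDl addrC subrK.
by rewrite lerD2l (bigD1 p) //= lerDl sumr_ge0.
Qed.

Lemma diag_comp_witness I k : Some k \in diag_comp B lam I ->
  exists2 x, face B lam I x & x 0 k < lam 0 k.
Proof.
move=> kC; pose P (v : option 'I_n) :=
  exists x, [/\ weyl_orbit B lam x, forall i, i \in I -> x 0 i = lam 0 i
  & forall j, v = Some j -> x 0 j < lam 0 j].
suff [x [x_orb fixI xk]] : P (Some k) by exists x; [split; first exact: conv_mem | exact: xk].
move: kC; rewrite inE; move: (Some k).
apply: (connect_ind (P := P)); first by exists lam; split; first constructor.
move=> u [k'|] _ /and3P [_ k'V edge] [x [x_orb fixI xu]]; last by exists x.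
rewrite inE in k'V.
have [lt_k'|ge_k'] := ltrP (x 0 k') (lam 0 k'); first by exists x; split => // _ [<-].
have xk' : x 0 k' = lam 0 k' by apply/eqP; rewrite eq_le ge_k' weyl_orbit_le.
have ip_gt0 : 0 < <<x, alpha k'>>.
  case: u xu edge => [j|] xu /= edge; last first.
    by have := ip_alpha_orbit_ge k' x_orb xk'; rewrite xk' subrr mul0r addr0; lra.
  case/andP: edge => jk' Bjk'; have := ip_alpha_orbit_ge j x_orb xk'.
  have : 0 < (x 0 j - lam 0 j) * B j k'.
    by rewrite nmulr_lgt0 ?subr_lt0 ?xu // lt_neqAle Bjk' gram_offdiag_le0.
  by have := lam_dom k'; lra.
exists (sref B k' x); split; first by constructor.
- by move=> i iI; rewrite sref_coord_neq ?fixI //; apply: contraNneq k'V => <-.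
- move=> _ [<-]; rewrite sref_coord eqxx mulr1 -xk' ltrBlDr ltrDl.
  by rewrite /coroot_pairing ip_alpha divr_gt0 ?mulr_gt0 ?gram_diag_gt0.
Qed.

Lemma face_subset_diag_comp I J : (forall x, face B lam I x -> face B lam J x) ->
  diag_comp B lam I \subset diag_comp B lam J.
Proof.
move=> sub_face; rewrite !diag_compE; apply: component_subset; first by rewrite inE.
apply/subsetP => -[k kC|_]; rewrite inE //.
have [x xI xk] := diag_comp_witness kC.
by apply: contraTN xk => kJ; rewrite ((sub_face x xI).2 k kJ) ltxx.
Qed.

Lemma diag_comp_subset_face I J : diag_comp B lam I \subset diag_comp B lam J ->
  forall x, face B lam I x -> face B lam J x.
Proof.
rewrite !diag_compE => sub_comp x [x_poly fixI]; split => // j jJ.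
have NoneV : None \in compl_vertices I by rewrite inE.
pose C := component (ext_edge B lam) (compl_vertices I) None.
apply: (face_fix_sep (I := I) (D := [set p | Some p \in C])) => //.
- move=> p q; rewrite in_set => pC; rewrite in_set => qC qI.
  have pq : p != q by apply: contraNneq qC => <-.
  apply/eqP/negPn/negP => Bpq; move/negP: qC; apply.
  by apply: (component_edge NoneV pC); rewrite ?inE //= /dynkin_edge pq.
- move=> q; rewrite in_set => qC qI; apply/eqP; rewrite eq_le lam_dom andbT leNgt.
  apply: contra qC => ip_gt0; apply: (component_edge NoneV (mem_component _ _ _)) => //.
  by rewrite inE.
- rewrite in_set; apply: contraTN jJ => /(subsetP sub_comp).
  by move/(subsetP (component_sub _ _)); rewrite !inE; apply.
Qed.

End DominantWeight.

End RootData.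

Lemma compl_vertices_preim n (S : {set option 'I_n}) :
  None \in S -> compl_vertices [set i | Some i \notin S] = S.
Proof. by move=> NoneS; apply/setP => -[j|]; rewrite !inE ?negbK. Qed.

Theorem theorem4p5 (R : realType) (n : nat) (B : 'M[R]_n) (lam : 'rV[R]_n) :
  simple_gram B -> dominant_integral B lam ->
  [/\ (forall I : {set 'I_n},
         None \in diag_comp B lam I /\ connected_in (ext_edge B lam) (diag_comp B lam I)),
      (forall I J : {set 'I_n},
         (forall x, face B lam I x -> face B lam J x) <->
         diag_comp B lam I \subset diag_comp B lam J)
    & (forall S : {set option 'I_n},
         None \in S -> connected_in (ext_edge B lam) S ->
         exists I : {set 'I_n}, diag_comp B lam I = S)].
Proof.
case=> _ gram_sym gram_posdef gram_cartan _ /(dominant_ip_alpha_ge0 gram_posdef) lam_dom.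
split.
- move=> I; rewrite diag_compE; split; first exact: mem_component.
  exact/connected_component/ext_edge_sym.
- move=> I J; split; first exact: face_subset_diag_comp.
  exact: diag_comp_subset_face.
- move=> S NoneS connS; exists [set i | Some i \notin S].
  rewrite diag_compE compl_vertices_preim //.
  exact/connected_componentE/connS.
Qed.
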